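(* Let $A\in\mathbb{R}^{n\times n}$ with $K_A=\mathbb{R}^n_+\cap R(A)\ne\{0\}$. If $A$ is strictly copositive on $K_A$, i.e. $x^TAx>0$ for every nonzero $x\in K_A$, then $A$ is a Karamardian matrix.
   Context: For $M\in\mathbb{R}^{n\times n}$ let $K_M=\mathbb{R}^n_+\cap R(M)$ and $K_M^*=\{y: x^Ty\ge 0\ \forall x\in K_M\}$ (one has $K_M^*=\mathbb{R}^n_++N(M^T)$, with interior $\{a+b: a>0,\ b\in N(M^T)\}$). For $q$, LCP$(M,K_M,q)$ is to find $x\in K_M$ with $Mx+q\in K_M^*$ and $x^T(Mx+q)=0$. $M$ is a Karamardian matrix if $K_M\ne\{0\}$ and there exists $d$ in the interior of $K_M^*$ such that both LCP$(M,K_M,0)$ and LCP$(M,K_M,d)$ have $x=0$ as their only solution. *)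

From mathcomp Require Import all_boot all_order all_algebra.
Set Implicit Arguments. Unset Strict Implicit. Unset Printing Implicit Defensive.
Import Order.TTheory GRing.Theory Num.Theory.
Local Open Scope ring_scope.

Definition nonnegv (R : realFieldType) n (x : 'cV[R]_n) : Prop :=
  forall i, 0 <= x i 0.

Definition in_range (R : realFieldType) n (M : 'M[R]_n) (x : 'cV[R]_n) : Prop :=
  exists y : 'cV[R]_n, x = M *m y.

Definition K_cone (R : realFieldType) n (M : 'M[R]_n) (x : 'cV[R]_n) : Prop :=
  nonnegv x /\ in_range M x.

Definition K_dual (R : realFieldType) n (M : 'M[R]_n) (y : 'cV[R]_n) : Prop :=
  forall x, K_cone M x -> 0 <= (x^T *m y) 0 0.

(* topological interior (sup-norm balls; all norms on R^n are equivalent) *)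
Definition in_interior (R : realFieldType) n (S : 'cV[R]_n -> Prop)
  (d : 'cV[R]_n) : Prop :=
  exists2 eps : R, 0 < eps &
    forall y : 'cV[R]_n, (forall i, `|y i 0 - d i 0| < eps) -> S y.

Definition LCP_sol (R : realFieldType) n (M : 'M[R]_n) (q x : 'cV[R]_n) : Prop :=
  K_cone M x /\ K_dual M (M *m x + q) /\ (x^T *m (M *m x + q)) 0 0 = 0.

Definition karamardian (R : realFieldType) n (M : 'M[R]_n) : Prop :=
  (exists x, K_cone M x /\ x <> 0) /\
  exists d : 'cV[R]_n, in_interior (K_dual M) d /\
    (forall x, LCP_sol M 0 x -> x = 0) /\
    (forall x, LCP_sol M d x -> x = 0).

From mathcomp Require Import all_boot all_order all_algebra lra.
Import Order.TTheory GRing.Theory Num.Theory.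
Local Open Scope ring_scope.

(* The argument rests on two facts:
   - every vector whose entries are bounded below by some eps > 0 lies in the
     interior of K_M^*, because the nonnegative orthant is contained in K_M^*
     (the dual of a subcone of R^n_+ contains the dual of R^n_+ = R^n_+);
   - if M is strictly copositive on K_M and q >= 0, then LCP(M, K_M, q) has
     only the trivial solution: for x != 0 in K_M the complementarity value
     x^T (M x + q) = x^T M x + x^T q is strictly positive.
   Taking q = 0 and q = d = (1, ..., 1) gives the two uniqueness clauses. *)

Section Karamardian.

Variables (R : realFieldType) (n : nat).
Implicit Types (M : 'M[R]_n) (x y q d : 'cV[R]_n).

Definition strictly_copositive_on_K M : Prop :=
  forall x, K_cone M x -> x <> 0 -> 0 < (x^T *m M *m x) 0 0.

Lemma dot_nonneg x y : nonnegv x -> nonnegv y -> 0 <= (x^T *m y) 0 0.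
Proof.
move=> hx hy; rewrite mxE; apply: sumr_ge0 => i _; rewrite mxE.
exact: mulr_ge0.
Qed.

Lemma nonneg_in_dual M y : nonnegv y -> K_dual M y.
Proof. by move=> hy x [hx _]; exact: dot_nonneg. Qed.

(* A vector with entries bounded below by eps > 0 is interior to K_M^*:
   the sup-norm ball of radius eps around it stays inside R^n_+. *)
Lemma bounded_below_interior_dual M d (eps : R) :
  0 < eps -> (forall i, eps <= d i 0) -> in_interior (K_dual M) d.
Proof.
move=> eps_gt0 hd; exists eps => // y hy; apply: nonneg_in_dual => i.
have close : d i 0 - y i 0 < eps.
  by apply: le_lt_trans (ler_norm _) _; rewrite distrC; exact: hy.
have := hd i; lra.
Qed.

Lemma complementarity_split M x q :
  (x^T *m (M *m x + q)) 0 0 = (x^T *m M *m x) 0 0 + (x^T *m q) 0 0.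
Proof. by rewrite mulmxDr mulmxA [LHS]mxE. Qed.

(* Under strict copositivity, LCP(M, K_M, q) with q >= 0 has only the zero
   solution: a nonzero solution would have positive complementarity value. *)
Lemma copositive_lcp_trivial M q x :
  strictly_copositive_on_K M -> nonnegv q -> LCP_sol M q x -> x = 0.
Proof.
move=> hM hq [hx [_ compl]]; apply: contra_eq compl => /eqP x_neq0.
rewrite complementarity_split gt_eqF // ltr_wpDr ?hM //.
exact: dot_nonneg hx.1 hq.
Qed.

End Karamardian.

Theorem mainTheorem18 (R : realFieldType) (n : nat) (A : 'M[R]_n) :
  (exists x, K_cone A x /\ x <> 0) ->
  (forall x : 'cV[R]_n, K_cone A x -> x <> 0 -> 0 < (x^T *m A *m x) 0 0) ->
  karamardian A.
Proof.
move=> K_nontrivial copos; split => //.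
have ones_ge1 (i : 'I_n) : 1 <= (const_mx 1 : 'cV[R]_n) i 0 by rewrite mxE.
have ones_nonneg : nonnegv (const_mx 1 : 'cV[R]_n).
  by move=> i; rewrite mxE ler01.
exists (const_mx 1); split; [|split].
- exact: bounded_below_interior_dual ltr01 ones_ge1.
- by move=> x; apply: copositive_lcp_trivial => // i; rewrite mxE.
- by move=> x; apply: copositive_lcp_trivial.
Qed.
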